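(* If $X$ is a nonempty topological space and $\Omega\neq\Omega_0$ is an arbitrary topological signature (i.e., $\Omega_n\neq\emptyset$ for some $n\ge1$), then the free Stone topological algebra $\overline{\Omega}_X\mathcal{S}t_\Omega$ is not profinite.
   Context: $\Omega=\biguplus_n\Omega_n$ is a topological signature. A Stone topological $\Omega$-algebra is a compact Hausdorff 0-dimensional space $A$ with continuous evaluation maps $\Omega_n\times A^n\to A$; $\mathcal{S}t_\Omega$ is the class of all of them. $\overline{\Omega}_X\mathcal{S}t_\Omega$ is the free Stone topological algebra over $X$: a Stone topological $\Omega$-algebra with a continuous map $\iota$ from $X$ whose image generates a dense subalgebra, such that every continuous map from $X$ into a Stone topological $\Omega$-algebra $T$ factors uniquely as $\hat\varphi\circ\iota$ with $\hat\varphi$ a continuous homomorphism. A topological algebra is profinite if it is compact and any two distinct elements are separated by a continuous homomorphism into a finite discrete $\Omega$-algebra. *)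

From HB Require Import structures.
From mathcomp Require Import all_boot all_order all_algebra.
From mathcomp Require Import all_classical all_reals all_analysis.
Set Implicit Arguments. Unset Strict Implicit. Unset Printing Implicit Defensive.
Import Order.TTheory GRing.Theory Num.Theory.
Local Open Scope classical_set_scope.

(* A topological signature Omega = disjoint union of the Omega_n, given by its
   components Omega_n : topologicalType (disjoint-union topology). *)
Definition tsignature := nat -> topologicalType.

Definition nonnullary (Om : tsignature) : Prop :=
  exists n : nat, (0 < n)%N /\ inhabited (Om n).

Definition ops (Om : tsignature) (A : Type) :=
  forall n : nat, Om n -> ('I_n -> A) -> A.

Definition topalg (Om : tsignature) (A : topologicalType) (opA : ops Om A) : Prop :=
  forall n : nat,
    continuous (fun p : Om n * prod_topology (fun _ : 'I_n => A) => opA n p.1 p.2).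

Definition zero_dim (A : topologicalType) : Prop :=
  forall (x : A) (U : set A), nbhs x U ->
    exists V : set A, [/\ clopen V, V x & V `<=` U].

Definition stone_space (A : topologicalType) : Prop :=
  [/\ compact [set: A], hausdorff_space A & zero_dim A].

Definition stone_alg (Om : tsignature) (A : topologicalType) (opA : ops Om A) : Prop :=
  stone_space A /\ topalg opA.

Definition is_hom (Om : tsignature) (A B : Type) (opA : ops Om A) (opB : ops Om B)
  (h : A -> B) : Prop :=
  forall (n : nat) (w : Om n) (a : 'I_n -> A), h (opA n w a) = opB n w (h \o a).

Definition closed_under_ops (Om : tsignature) (A : Type) (opA : ops Om A) (S : set A) : Prop :=
  forall (n : nat) (w : Om n) (a : 'I_n -> A), (forall i, S (a i)) -> S (opA n w a).

Definition gen_subalg (Om : tsignature) (A : Type) (opA : ops Om A) (G : set A) : set A :=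
  \bigcap_(S in [set S | G `<=` S /\ closed_under_ops opA S]) S.

Definition free_stone_alg (Om : tsignature) (X : topologicalType)
  (F : topologicalType) (opF : ops Om F) (iota : X -> F) : Prop :=
  [/\ stone_alg opF, continuous iota,
      closure (gen_subalg opF (range iota)) = [set: F] &
      forall (T : topologicalType) (opT : ops Om T), stone_alg opT ->
      forall phi : X -> T, continuous phi ->
      exists phih : F -> T,
        [/\ continuous phih, is_hom opF opT phih, phih \o iota = phi &
            forall psi : F -> T, continuous psi -> is_hom opF opT psi ->
              psi \o iota = phi -> psi = phih]].

Definition profinite (Om : tsignature) (A : topologicalType) (opA : ops Om A) : Prop :=
  compact [set: A] /\
  forall x y : A, x <> y ->
    exists (B : discreteTopologicalType) (opB : ops Om B) (h : A -> B),
      [/\ finite_set [set: B], topalg opB, continuous h, is_hom opA opB h &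
          h x <> h y].

From HB Require Import structures.
From mathcomp Require Import all_boot all_order all_algebra.
From mathcomp Require Import all_classical all_reals all_analysis.
From mathcomp Require Import zify.
Local Open Scope classical_set_scope.

(* The Cantor space becomes a Stone algebra by interpreting every operation of
   positive arity as the shift of its first argument.  Sending every point of X
   to the indicator d of {(2k+1)! | k} yields a continuous homomorphism phi from
   the free algebra, and phi maps the n-fold iterate g^n z of the unary term
   g y = w(y, ..., y) at z = iota x0 to the n-fold shift of d, whose first bit
   is d n.  By compactness pick cluster points u of (g^((2n+2)!) z) and v of
   (g^((2n+1)!) z); their images under phi differ in their first bit, so
   u <> v.  But in a finite algebra the orbit of g is eventually periodic, and
   k! is eventually a multiple of its period, so every continuous homomorphism
   into a finite discrete algebra is eventually constant along g^(k!) z and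
   identifies u and v. *)

Lemma cluster_closed (T : topologicalType) (F : set_system T) (C : set T) (u : T) :
  closed C -> F C -> cluster F u -> C u.
Proof. by move=> cC FC Fu; apply: cC => B uB; exact: Fu. Qed.

Lemma cluster_eventually_eq (T : topologicalType) (D : discreteTopologicalType)
    (f : T -> D) (x : nat -> T) (c : D) (u : T) :
  continuous f -> (\forall n \near \oo, f (x n) = c) ->
  cluster (x @ \oo) u -> f u = c.
Proof.
move=> cf fxc; apply: (@cluster_closed _ _ (f @^-1` [set c])) => //.
exact: (continuous_closedP _).1 cf _ (discrete_closed _).
Qed.

Lemma fact_inj : {in [pred k | 0 < k]%N &, injective factorial}.
Proof.
move=> m n m_gt0 n_gt0 eq_mn.
by case: (ltngtP m n) => // [lt_mn|lt_nm];
  [move: (ltn_fact m_gt0 lt_mn) | move: (ltn_fact n_gt0 lt_nm)];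
  rewrite eq_mn ltnn.
Qed.

Section IterFinite.
Variables (B : Type) (G : B -> B) (b : B).

Lemma iter_periodic i j : (i < j)%N -> iter i G b = iter j G b ->
  forall m k, (i <= m)%N -> iter (m + k * (j - i)) G b = iter m G b.
Proof.
move=> lt_ij eq_ij m k le_im.
have step m' : (i <= m')%N -> iter (m' + (j - i)) G b = iter m' G b.
  move=> le_im'; rewrite -(subnK le_im') -addnA subnKC ?(ltnW lt_ij) //.
  by rewrite !iterD eq_ij.
elim: k => [|k IHk]; first by rewrite mul0n addn0.
by rewrite mulSn (addnC (j - i)) addnA step ?IHk // (leq_trans le_im) ?leq_addr.
Qed.

Hypothesis finB : finite_set [set: B].

Lemma iter_collision : exists i j, (i < j)%N /\ iter i G b = iter j G b.
Proof.
apply: contrapT => no_collision.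
have inj : {in [set: nat] &, injective (fun m => iter m G b)}.
  move=> i j _ _ eq_ij; case: (ltngtP i j) => // [lt_ij|lt_ji]; exfalso.
  - by apply: no_collision; exists i, j.
  - by apply: no_collision; exists j, i.
have /card_eqPle[_ le_nat_B] := inj_card_eq inj.
by apply: infinite_nat; exact: card_le_finite le_nat_B (sub_finite_set _ finB).
Qed.

(* The period divides k! as soon as k exceeds the collision index. *)
Lemma iter_fact_eventually_constant :
  exists N, forall n, (N <= n)%N -> iter n`! G b = iter N`! G b.
Proof.
have [i [j [lt_ij eq_ij]]] := iter_collision.
exists j => n le_jn.
have le_fact : (j`! <= n`!)%N by exact: leq_fact.
have dvd_period : (j - i) %| n`! - j`!.
  by apply: dvdn_sub; apply: dvdn_fact; lia.
rewrite -(subnK le_fact) addnC -(divnK dvd_period) iter_periodic //.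
exact: leq_trans (ltnW lt_ij) (fact_geq j).
Qed.

End IterFinite.

Definition diag_op {Om : tsignature} {A : Type} (opA : ops Om A) {n} (w : Om n)
  (y : A) : A := opA n w (fun _ => y).

Lemma iter_diag_op_hom {Om : tsignature} {A B : Type} {opA : ops Om A}
    {opB : ops Om B} {h : A -> B} :
  is_hom opA opB h -> forall n (w : Om n) (x : A) m,
  h (iter m (diag_op opA w) x) = iter m (diag_op opB w) (h x).
Proof. by move=> h_hom n w x; elim=> [|m IHm] //=; rewrite /diag_op h_hom -IHm. Qed.

Lemma cluster_iter_fact_hom {Om : tsignature} {A : topologicalType}
    {opA : ops Om A} {B : discreteTopologicalType} {opB : ops Om B}
    {h : A -> B} {n} (w : Om n) (z : A) :
  finite_set [set: B] -> continuous h -> is_hom opA opB h ->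
  exists c, forall (s : nat -> nat) (y : A), (forall k, k <= s k)%N ->
    cluster ((fun k => iter (s k)`! (diag_op opA w) z) @ \oo) y -> h y = c.
Proof.
move=> finB h_cont h_hom.
have [N stable] := @iter_fact_eventually_constant _ (diag_op opB w) (h z) finB.
exists (iter N`! (diag_op opB w) (h z)) => s y le_s y_cl.
apply: cluster_eventually_eq h_cont _ y_cl; exists N => // k /= le_Nk.
by rewrite (iter_diag_op_hom h_hom) stable // (leq_trans le_Nk).
Qed.

Definition cantor_shift (x : cantor_space) : cantor_space := fun m => x m.+1.

Lemma cantor_shift_continuous : continuous cantor_shift.
Proof.
move=> x; apply/pointwise_cvgP => t.
exact: (@proj_continuous nat (fun _ => bool) t.+1 x).
Qed.

Lemma iter_cantor_shift m (x : cantor_space) t : iter m cantor_shift x t = x (m + t).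
Proof. by elim: m t => [|m IHm] t //; rewrite iterS /cantor_shift IHm addSnnS. Qed.

Lemma cantor_zero_dim : zero_dim cantor_space.
Proof.
move=> x U xU.
have [V [Vx clV] VU] := zero_dimensional_cvg cantor_space_hausdorff
  cantor_zero_dimensional cantor_space_compact xU.
by exists V.
Qed.

Definition cantor_ops (Om : tsignature) : ops Om cantor_space := fun n =>
  match n with
  | 0 => fun _ _ => cst false
  | n.+1 => fun _ a => cantor_shift (a ord0)
  end.

Lemma cantor_ops_topalg (Om : tsignature) : topalg (cantor_ops Om).
Proof.
case=> [|n] /=; first exact: cst_continuous.
move=> p; apply: continuous_comp (cantor_shift_continuous _).
apply: (@continuous_comp _ {ptws 'I_n.+1 -> cantor_space} _ snd (fun a => a ord0)).
  exact: cvg_snd.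
exact: (@proj_continuous _ (fun _ => cantor_space) ord0).
Qed.

Lemma cantor_stone_alg (Om : tsignature) : stone_alg (cantor_ops Om).
Proof.
split; last exact: cantor_ops_topalg.
by split; [exact: cantor_space_compact|exact: cantor_space_hausdorff|exact: cantor_zero_dim].
Qed.

Lemma diag_cantor_ops (Om : tsignature) n (w : Om n) :
  (0 < n)%N -> diag_op (cantor_ops Om) w = cantor_shift.
Proof. by case: n w. Qed.

Definition odd_fact_indicator : cantor_space :=
  fun m => `[< exists k, m = (k.*2.+1)`! >].

Lemma odd_fact_indicator_odd n : odd_fact_indicator (n.*2.+1)`! = true.
Proof. by apply/asboolP; exists n. Qed.

Lemma odd_fact_indicator_even n : odd_fact_indicator (n.+1).*2`! = false.
Proof.
apply/asboolP => -[k /fact_inj eq_nk].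
by move: (congr1 odd (eq_nk isT isT)); rewrite /= !odd_double.
Qed.

Theorem theorem4p18 (Om : tsignature) (X : topologicalType)
  (F : topologicalType) (opF : ops Om F) (iota : X -> F) :
  inhabited X -> nonnullary Om -> free_stone_alg opF iota ->
  ~ profinite opF.
Proof.
move=> [x0] [n [n_gt0 [w]]] [_ _ _ univF] [compF sepF].
have [phi [phi_cont phi_hom phi_iota _]] :=
  univF _ _ (cantor_stone_alg Om) (cst odd_fact_indicator) (@cst_continuous X _ _).
pose z := iota x0; pose g := diag_op opF w.
have phi_iter m : phi (iter m g z) 0%N = odd_fact_indicator m.
  rewrite (iter_diag_op_hom phi_hom) diag_cantor_ops // iter_cantor_shift addn0.
  by rewrite /z -[phi (iota x0)]/((phi \o iota) x0) phi_iota.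
have phi0_cont : continuous (fun y => phi y 0%N).
  move=> y; apply: (@continuous_comp F cantor_space bool phi (fun c => c 0%N) y).
    exact: phi_cont.
  exact: (@proj_continuous nat (fun _ => bool) 0%N).
have [u [_ u_cl]] := compF ((fun k => iter (k.+1).*2`! g z) @ \oo) _ filterT.
have [v [_ v_cl]] := compF ((fun k => iter (k.*2.+1)`! g z) @ \oo) _ filterT.
have phi_u : phi u 0%N = false.
  by apply: cluster_eventually_eq phi0_cont _ u_cl; exists 0%N => // k _ /=;
    rewrite phi_iter odd_fact_indicator_even.
have phi_v : phi v 0%N = true.
  by apply: cluster_eventually_eq phi0_cont _ v_cl; exists 0%N => // k _ /=;
    rewrite phi_iter odd_fact_indicator_odd.
have u_neq_v : u <> v by move=> eq_uv; move: phi_u; rewrite eq_uv phi_v.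
have [B [opB [h [finB _ h_cont h_hom]]]] := sepF u v u_neq_v; apply.
have [c h_cl] := cluster_iter_fact_hom w z finB h_cont h_hom.
by rewrite (h_cl _ _ _ u_cl) ?(h_cl _ _ _ v_cl) // => k; lia.
Qed.
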